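(* Every tree with more than two vertices is a skeleton.
   Context: For simple graphs $G$ and $H$, $H$ is a skeletal of $G$ if there is a surjective map $\phi:V(G)\to V(H)$ such that for all distinct vertices $a,b$ of $G$: $a$ and $b$ are adjacent in $G$ if and only if $\phi(a)=\phi(b)$ or $\phi(a)$ and $\phi(b)$ are adjacent in $H$. A skeletal $H$ of $G$ under $\phi$ is proper if $|\phi^{-1}(v)|\ge 2$ for at least one vertex $v$ of $H$. A graph is a skeleton if it has no proper skeletal. *)

From mathcomp Require Import all_boot.
Set Implicit Arguments. Unset Strict Implicit. Unset Printing Implicit Defensive.

Definition simple_graph (T : finType) (e : rel T) : Prop :=
  symmetric e /\ irreflexive e.

Definition connected_graph (T : finType) (e : rel T) : Prop :=
  forall x y : T, connect e x y.

Definition acyclic_graph (T : finType) (e : rel T) : Prop :=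
  forall s : seq T, uniq s -> 3 <= size s -> ~~ cycle e s.

Definition is_tree (T : finType) (e : rel T) : Prop :=
  simple_graph e /\ connected_graph e /\ acyclic_graph e.

Definition skeletal_under (V W : finType) (g : rel V) (h : rel W) (phi : V -> W)
  : Prop :=
  (forall w : W, exists v : V, phi v = w) /\
  (forall a b : V, a != b -> g a b = (phi a == phi b) || h (phi a) (phi b)).

Definition proper_skeletal_under (V W : finType) (g : rel V) (h : rel W)
  (phi : V -> W) : Prop :=
  skeletal_under g h phi /\ exists w : W, 2 <= #|[pred v | phi v == w]|.

Definition is_skeleton (V : finType) (g : rel V) : Prop :=
  forall (W : finType) (h : rel W) (phi : V -> W),
    simple_graph h -> ~ proper_skeletal_under g h phi.

From mathcomp Require Import all_boot.

Set Implicit Arguments.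
Unset Strict Implicit.
Unset Printing Implicit Defensive.

(* If [phi] merges two vertices [a <> b], the skeletal condition forces [a ~ b]
   and makes [a] and [b] twins: every third vertex sees both or neither.  With a
   third vertex present, connectivity gives an edge leaving [{a, b}]; its
   outer end [v] is then adjacent to both, and [a b v] is a triangle. *)

Lemma exists_notin_card_lt (T : finType) (A : {set T}) :
  #|A| < #|T| -> exists x, x \notin A.
Proof.
move=> ltAT; have /set0Pn[x] : ~: A != set0.
  by rewrite -card_gt0 cardsCs setCK subn_gt0.
by rewrite inE; exists x.
Qed.

Lemma connect_exit (T : finType) (e : rel T) (A : pred T) (x y : T) :
  x \in A -> y \notin A -> connect e x y ->
  exists u v, [/\ u \in A, v \notin A & e u v].
Proof.
move=> xA yA /connectP[p]; elim: p x xA => [|z p IHp] x xA /=.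
  by move=> _ yx; rewrite yx xA in yA.
case/andP=> exz zp y_last; have [zA | zA] := boolP (z \in A).
  exact: IHp zp y_last.
by exists x, z.
Qed.

Lemma acyclic_no_triangle (T : finType) (e : rel T) (a b c : T) :
  acyclic_graph e -> [/\ a != b, b != c & c != a] ->
  ~ [/\ e a b, e b c & e c a].
Proof.
move=> acyc [ab bc ca] [eab ebc eca].
have uniq_abc : uniq [:: a; b; c] by rewrite /= !inE negb_or ab eq_sym ca bc.
by move/negP: (acyc _ uniq_abc isT); rewrite /= eab ebc eca.
Qed.

Section SkeletalFibre.

Variables (V W : finType) (g : rel V) (h : rel W) (phi : V -> W).
Hypothesis skel : skeletal_under g h phi.
Variables (a b : V).
Hypothesis phi_ab : phi a = phi b.

Lemma skeletal_fibre_adj : a != b -> g a b.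
Proof. by case: skel => _ adj ab; rewrite adj // phi_ab eqxx. Qed.

Lemma skeletal_fibre_twins (c : V) : c != a -> c != b -> g a c = g b c.
Proof.
case: skel => _ adj ca cb.
by rewrite (adj a c) 1?eq_sym // (adj b c) 1?eq_sym // phi_ab.
Qed.

End SkeletalFibre.

Theorem mainTheorem4 (V : finType) (g : rel V) :
  is_tree g -> 2 < #|V| -> is_skeleton g.
Proof.
move=> [[gsym _] [gconn acyc]] V_gt2 W h phi _ [skel [w fibre_gt1]].
have [a [b [/[!inE]/eqP phi_a /eqP phi_b ab]]] := card_gt1P fibre_gt1.
have phi_ab : phi a = phi b by rewrite phi_a phi_b.
have twins := skeletal_fibre_twins skel phi_ab.
have [c c_notin] : exists c, c \notin [set a; b].
  by apply: exists_notin_card_lt; rewrite cards2 ab.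
have [u [v [/set2P u_ab /[!inE]/norP[va vb] guv]]] :=
  connect_exit (set21 a b) c_notin (gconn a c).
have gav : g a v by case: u_ab guv => ->; rewrite // twins.
apply: (acyclic_no_triangle (a := a) (b := b) (c := v) acyc).
  by rewrite ab va eq_sym vb.
by rewrite (skeletal_fibre_adj skel phi_ab) // -twins // [g v a]gsym gav.
Qed.
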